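(* Assume the standing setting of the context. Let $(x,y)\in\Lambda$ with $y>0$, and suppose $(x,y)$ is the winner at some point $(a,b)\in\Omega$. Then \[ \frac{x_0-1}{y_0}\le\frac{x-1}{y}<\frac{x_0-1}{y_0}+n\alpha, \] so the point $\big(\frac{x-1}{y},1\big)$ lies in $\Omega$, on its top edge. Moreover, $(x,y)$ is the winner at $\big(\frac{x-1}{y},1\big)$.
   Context: Setting. Let $(X,\omega)$ be a Veech translation surface and fix a cusp of its Veech group, normalized by a matrix $C\in\mathrm{SL}_2(\mathbb{R})$ as in Kumanduri–Sanchez–Wang. Let $\Lambda\subset\mathbb{R}^2$ be the set of holonomy vectors of saddle connections of the normalized surface $C\cdot(X,\omega)$; it is a discrete set. Distinguished vector. Let $(x_0,y_0)\in\Lambda$ be the vector such that $y_0>0$ is the smallest positive $y$-component of vectors of $\Lambda$, and $x_0>0$ is the smallest positive $x$-component among vectors of $\Lambda$ with $y$-component $y_0$. In particular, $y\ge y_0$ for every $(x,y)\in\Lambda$ with $y>0$. Cusp parameters. $\alpha>0$ is the cusp width parameter and $n\in\{1,2\}$; $n=2$ exactly when the parabolic generator of the cusp has eigenvalue $-1$. Transversal. \[ \Omega=\Big\{(a,b)\in\mathbb{R}^2: 0<b\le1,\ \tfrac{x_0}{y_0}b-\tfrac1{y_0}\le a<(\tfrac{x_0}{y_0}+n\alpha)b-\tfrac1{y_0}\Big\}. \] Its top edge is identified with the interval \[ A=\Big[\tfrac{x_0-1}{y_0},\tfrac{x_0-1}{y_0}+n\alpha\Big) \] via $a\mapsto(a,1)$.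 Winners. A vector $(x,y)\in\Lambda$ is a candidate winning vector at $(a,b)$ if $y>0$ and $0<bx-ay\le1$. For vectors with positive $y$-component, $(u,v)$ has slope at most that of $(x,y)$ iff $u/v\ge x/y$. The winner at $(a,b)\in\Omega$ is the candidate with the largest value of $x/y$ (least slope); if several share it, the winner is the shortest of them. *)

From Stdlib Require Export Reals.
Open Scope R_scope.

Definition set2 := R -> R -> Prop.

(* Discrete (closed discrete, no accumulation point in R^2). *)
Definition discrete2 (L : set2) : Prop :=
  forall px py : R, exists eps : R, 0 < eps /\
    forall u v, L u v -> (u - px)^2 + (v - py)^2 < eps^2 -> u = px /\ v = py.

Definition distinguished (L : set2) (x0 y0 : R) : Prop :=
  L x0 y0 /\ 0 < y0 /\ 0 < x0 /\
  (forall x y, L x y -> 0 < y -> y0 <= y) /\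
  (forall x, L x y0 -> 0 < x -> x0 <= x).

Definition Omega (x0 y0 : R) (n : nat) (alpha a b : R) : Prop :=
  0 < b <= 1 /\
  x0 / y0 * b - 1 / y0 <= a < (x0 / y0 + INR n * alpha) * b - 1 / y0.

Definition candidate (L : set2) (a b x y : R) : Prop :=
  L x y /\ 0 < y /\ 0 < b * x - a * y <= 1.

Definition winner (L : set2) (a b x y : R) : Prop :=
  candidate L a b x y /\
  forall u v, candidate L a b u v ->
    u / v < x / y \/
    (u / v = x / y /\ sqrt (x^2 + y^2) <= sqrt (u^2 + v^2)).

From Stdlib Require Import Reals Lra Psatz.
Open Scope R_scope.

(* Write s = x/y for the slope of a winner (x, y) at (a, b) and t = (x - 1)/y.
   Either (x0, y0) is itself a candidate at (a, b), or it lies on the wrong side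
   of the line through (a, b); both give x0/y0 <= s, and since y0 <= y this yields
   (x0 - 1)/y0 <= t.  The upper bound on t comes from b x - a y <= 1 and the
   right edge of Omega.  Finally, every candidate (u, v) at (t, 1) of slope at most
   that of (x, y) satisfies b u - a v <= u - t v, so it is a candidate at (a, b),
   and the winner property at (a, b) transfers to (t, 1).  Discreteness of the
   holonomy set and the values of alpha and n play no role. *)

Lemma cross_pos_iff_slope_gt (a b x y : R) :
  0 < b -> 0 < y -> (0 < b * x - a * y <-> a / b < x / y).
Proof.
  intros Hb Hy.
  assert (E : b * x - a * y = b * y * (x / y - a / b)) by (field; lra).
  rewrite E; split; intro H.
  - apply Rlt_0_minus, (Rmult_lt_reg_l (b * y)); nra.
  - apply Rmult_lt_0_compat; nra.
Qed.

Lemma top_edge_coord (x y : R) : y <> 0 -> (x - 1) / y = x / y - / y.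
Proof. intro Hy; field; exact Hy. Qed.

Lemma winner_slope_max (L : set2) (a b x y u v : R) :
  winner L a b x y -> candidate L a b u v -> u / v <= x / y.
Proof. intros [_ Hbest] Huv; destruct (Hbest u v Huv) as [H | [H _]]; lra. Qed.

Lemma cross_le_top_edge_cross (a b x y u v : R) :
  0 < b <= 1 -> 0 < y -> 0 < v -> b * x - a * y <= 1 -> x / y <= u / v ->
  b * u - a * v <= u - (x - 1) / y * v.
Proof.
  intros Hb Hy Hv Hxy Hslope.
  rewrite top_edge_coord by lra.
  set (s := x / y) in *; set (w := u / v) in *; set (m := / y).
  assert (Ex : x = s * y) by (unfold s; field; lra).
  assert (Eu : u = w * v) by (unfold w; field; lra).
  assert (Hm : 0 < m) by (apply Rinv_0_lt_compat; lra).
  assert (Hbs : b * s - a <= m).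
  { assert (Em : m * y = 1) by (unfold m; field; lra).
    rewrite Ex in Hxy; nra. }
  (* The difference is v ((1 - b)(w - s) + (m - (b s - a))), a product of nonnegatives. *)
  rewrite Eu.
  assert (0 <= (1 - b) * (w - s) + (m - (b * s - a))) by nra.
  nra.
Qed.

Lemma candidate_top_edge_candidate (L : set2) (a b x y u v : R) :
  0 < b <= 1 -> candidate L a b x y -> candidate L ((x - 1) / y) 1 u v ->
  x / y <= u / v -> candidate L a b u v.
Proof.
  intros Hb [_ [Hy [Hpos Hle]]] [Luv [Hv [Hpos' Hle']]] Hslope.
  split; [exact Luv|]; split; [exact Hv|]; split.
  - apply cross_pos_iff_slope_gt; try lra.
    apply (Rlt_le_trans _ (x / y)); [apply cross_pos_iff_slope_gt|]; lra.
  - pose proof (cross_le_top_edge_cross a b x y u v Hb Hy Hv Hle Hslope); lra.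
Qed.

Lemma winner_top_edge (L : set2) (a b x y : R) :
  0 < b <= 1 -> winner L a b x y -> winner L ((x - 1) / y) 1 x y.
Proof.
  intros Hb Hwin.
  pose proof Hwin as [[Lxy [Hy _]] Hbest].
  split.
  - split; [exact Lxy|]; split; [exact Hy|].
    replace (1 * x - (x - 1) / y * y) with 1 by (field; lra); lra.
  - intros u v Huv.
    destruct (Rlt_or_le (u / v) (x / y)) as [Hlt | Hge]; [left; exact Hlt|].
    apply Hbest, (candidate_top_edge_candidate L a b x y); auto.
    apply Hwin.
Qed.

Lemma distinguished_slope_le_winner (L : set2) (x0 y0 a b x y : R) :
  distinguished L x0 y0 -> 0 < b -> x0 / y0 * b - 1 / y0 <= a ->
  winner L a b x y -> x0 / y0 <= x / y.
Proof.
  intros [L0 [Hy0 _]] Hb Ha Hwin.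
  destruct (Rlt_or_le 0 (b * x0 - a * y0)) as [Hpos | Hnpos].
  - apply (winner_slope_max L a b); [exact Hwin|].
    split; [exact L0|]; split; [exact Hy0|]; split; [exact Hpos|].
    assert (E : b * x0 - (x0 / y0 * b - 1 / y0) * y0 = 1) by (field; lra).
    nra.
  - destruct Hwin as [[_ [Hy [Hpos _]]] _].
    apply Rlt_le, (Rle_lt_trans _ (a / b)).
    + apply Rnot_lt_le; intro Hlt.
      apply cross_pos_iff_slope_gt in Hlt; lra.
    + apply cross_pos_iff_slope_gt; lra.
Qed.

Lemma top_edge_lower (x0 y0 x y : R) :
  0 < y0 <= y -> x0 / y0 <= x / y -> (x0 - 1) / y0 <= (x - 1) / y.
Proof.
  intros Hy0 Hslope.
  rewrite !top_edge_coord by lra.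
  pose proof (Rinv_le_contravar y0 y (proj1 Hy0) (proj2 Hy0)); lra.
Qed.

Lemma top_edge_upper (x0 y0 N a b x y : R) :
  0 < b <= 1 -> 0 < y0 <= y -> a < (x0 / y0 + N) * b - 1 / y0 ->
  b * x - a * y <= 1 -> (x - 1) / y < (x0 - 1) / y0 + N.
Proof.
  intros Hb Hy0 Ha Hxy.
  rewrite !top_edge_coord in * by lra.
  set (s := x / y); set (m := / y); set (k := / y0) in *.
  replace (1 / y0) with k in Ha by (unfold k; field; lra).
  assert (Hmk : m <= k) by (apply Rinv_le_contravar; lra).
  assert (Hm : 0 < m) by (apply Rinv_0_lt_compat; lra).
  assert (Hbs : b * s - a <= m).
  { assert (E : b * s - a = (b * x - a * y) * m) by (unfold s, m; field; lra).
    rewrite E; nra. }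
  (* b (s - m) <= a + (1 - b) m < b (x0/y0 + N - k) since m <= k. *)
  apply (Rmult_lt_reg_l b); [lra|].
  assert ((1 - b) * m <= (1 - b) * k) by nra.
  nra.
Qed.

Lemma Omega_top_edge (x0 y0 : R) (n : nat) (alpha t : R) :
  y0 <> 0 ->
  (Omega x0 y0 n alpha t 1 <->
   (x0 - 1) / y0 <= t < (x0 - 1) / y0 + INR n * alpha).
Proof.
  intro Hy0; unfold Omega.
  replace (x0 / y0 * 1 - 1 / y0) with ((x0 - 1) / y0) by (field; exact Hy0).
  replace ((x0 / y0 + INR n * alpha) * 1 - 1 / y0)
    with ((x0 - 1) / y0 + INR n * alpha) by (field; exact Hy0).
  lra.
Qed.

Theorem lemma3p1 (L : set2) (x0 y0 alpha : R) (n : nat)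
  (HL : discrete2 L) (Hdist : distinguished L x0 y0)
  (Halpha : 0 < alpha) (Hn : (n = 1 \/ n = 2)%nat)
  (x y a b : R) (Hxy : L x y) (Hy : 0 < y)
  (Hab : Omega x0 y0 n alpha a b) (Hwin : winner L a b x y) :
  (x0 - 1) / y0 <= (x - 1) / y < (x0 - 1) / y0 + INR n * alpha /\
  Omega x0 y0 n alpha ((x - 1) / y) 1 /\
  winner L ((x - 1) / y) 1 x y.
Proof.
  pose proof Hdist as [_ [Hy0 [_ [Hmin _]]]].
  assert (Hyy0 : 0 < y0 <= y) by (split; [exact Hy0 | exact (Hmin x y Hxy Hy)]).
  destruct Hab as [Hb [Hleft Hright]].
  assert (Hslope : x0 / y0 <= x / y)
    by exact (distinguished_slope_le_winner L x0 y0 a b x y Hdist (proj1 Hb) Hleft Hwin).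
  assert (Hcross : b * x - a * y <= 1) by apply Hwin.
  assert (Htop : (x0 - 1) / y0 <= (x - 1) / y < (x0 - 1) / y0 + INR n * alpha).
  { split; [exact (top_edge_lower x0 y0 x y Hyy0 Hslope)|].
    exact (top_edge_upper x0 y0 (INR n * alpha) a b x y Hb Hyy0 Hright Hcross). }
  split; [exact Htop|]; split.
  - apply Omega_top_edge; [lra | exact Htop].
  - exact (winner_top_edge L a b x y Hb Hwin).
Qed.
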